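(* Let $q$ be a prime power and $n\ge 3$ an integer. The matroid $\overline{\mathrm{PG}}(n-1,q)$ is $\mathrm{GF}(q)$-regular, i.e. it is representable over every field having $\mathrm{GF}(q)$ as a proper subfield.
   Context: Let $\mathbb F$ be a field with a $\mathrm{GF}(q)$-subfield, let $A$ be a $\mathrm{GF}(q)$-matrix with $n$ rows whose columns (indexed by $E(N)$) represent $N\cong \mathrm{PG}(n-1,q)$. Let $L_0$ be a line of $N$, $v\in \mathrm{col}_{\mathbb F}(A[L_0])$ a vector not parallel to any column of $A[L_0]$, $f\in E(N)-L_0$, and $\mathcal L$ the set of lines of $N$ in $\mathrm{cl}_N(L_0\cup\{f\})$ not containing $f$. For each $L\in\mathcal L$ let $v_L$ be a nonzero vector in $\mathrm{col}_{\mathbb F}(A[L])\cap\mathrm{col}_{\mathbb F}(v\,|\,A[f])$, and let $\overline A$ be $A$ with one new column $x_L=v_L$ appended for each $L\in\mathcal L$. The matroid represented by the columns of $\overline A$ is, up to isomorphism, independent of all choices (including $\mathbb F$); $\overline{\mathrm{PG}}(n-1,q)$ denotes any matroid isomorphic to it. *)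

From HB Require Import structures.
From mathcomp Require Import all_boot all_order all_algebra all_field.
Set Implicit Arguments. Unset Strict Implicit. Unset Printing Implicit Defensive.
Import GRing.Theory.
Local Open Scope ring_scope.

Section ColumnMatroid.
(* Column matroid of a family of vectors w : I -> F^r (vectors written as
   row vectors).  The ground set is (a subset of) the finite index type I. *)
Variables (F : fieldType) (I : finType) (r : nat) (w : I -> 'rV[F]_r).

Definition spanS (S : {set I}) : 'M[F]_r := (\sum_(i in S) <<w i>>)%MS.
Definition rk (S : {set I}) : nat := \rank (spanS S).
Definition indep (S : {set I}) : bool := rk S == #|S|.
Definition cl (S : {set I}) : {set I} := [set i | rk (i |: S) == rk S].
Definition is_flat (S : {set I}) : bool := cl S \subset S.
Definition is_line (L : {set I}) : bool := is_flat L && (rk L == 2%N).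
End ColumnMatroid.

(* A : 'I_m -> GF(q)^n represents PG(n-1,q): its columns are exactly one
   nonzero representative of each 1-dimensional subspace of GF(q)^n. *)
Definition is_PG_rep (K : fieldType) (n m : nat) (A : 'I_m -> 'rV[K]_n) : Prop :=
  [/\ forall i, A i != 0,
      forall i j, i != j -> ~~ (A i <= A j)%MS
    & forall x : 'rV[K]_n, x != 0 -> exists i, (x <= A i)%MS].

Definition calL (K : fieldType) (n m : nat) (A : 'I_m -> 'rV[K]_n)
  (L0 : {set 'I_m}) (f : 'I_m) : {set {set 'I_m}} :=
  [set L : {set 'I_m} | [&& is_line A L, L \subset cl A (f |: L0) & f \notin L]].

(* Ground type of Abar: the columns of A, plus one column x_L for each L
   (only L in calL are in the ground set). *)
Definition PGbar_ground (K : fieldType) (n m : nat) (A : 'I_m -> 'rV[K]_n)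
  (L0 : {set 'I_m}) (f : 'I_m) : {set ('I_m + {set 'I_m})} :=
  [set x : ('I_m + {set 'I_m})%type |
     match x with inl _ => true | inr L => L \in calL A L0 f end].

Definition PGbar_vec (K F : fieldType) (phi : {rmorphism K -> F}) (n m : nat)
  (A : 'I_m -> 'rV[K]_n) (vL : {set 'I_m} -> 'rV[F]_n) :
  ('I_m + {set 'I_m}) -> 'rV[F]_n :=
  fun x => match x with inl i => map_mx phi (A i) | inr L => vL L end.

Definition representable_over (F : fieldType) (I : finType) (r : nat)
  (w : I -> 'rV[F]_r) (E : {set I}) (F' : fieldType) : Prop :=
  exists (r' : nat) (w' : I -> 'rV[F']_r'),
    forall S : {set I}, S \subset E -> indep w S = indep w' S.

(* GF(q)-regular: representable over every field having GF(q) as a proper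
   subfield (a copy of GF(q) given by a non-surjective ring embedding). *)
Definition GFq_regular (q : nat) (F : fieldType) (I : finType) (r : nat)
  (w : I -> 'rV[F]_r) (E : {set I}) : Prop :=
  forall (K' : finFieldType) (F' : fieldType) (psi : {rmorphism K' -> F'}),
    #|K'| = q -> ~ (forall y : F', exists x : K', psi x = y) ->
    representable_over w E F'.

(* In the matroid represented by [Abar], the rank of a set consisting of
   columns [T] of [A] and new elements [x_L], [L] in [X], can be computed from
   the [GF(q)]-data alone: it is [r(T)] if [X] is empty, [r(T u L)] if
   [X = {L}], and [r(T u {f} u L0)] if [|X| >= 2].  This rests on [v] and the
   [x_L] being generic, i.e. not multiples of points of [PG(n-1,q)]: a generic
   vector in the span of a [GF(q)]-line lies in the span of a
   [GF(q)]-subspace only if the whole line does.  Hence the matroid does not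
   depend on [F], and over any field [F'] properly containing a copy of
   [GF(q)] such data exist: take [v = a + y b] with [y] outside that copy, and
   [x_L] spanning the meet of two lines of the plane [cl(L0 u {f})]. *)
From HB Require Import structures.
From mathcomp Require Import all_boot all_order all_algebra all_field.
From mathcomp Require Import fingroup cyclic.
From Stdlib Require Import Classical Wf_nat.
Set Implicit Arguments. Unset Strict Implicit. Unset Printing Implicit Defensive.
Import GRing.Theory FinRing.Theory.
Local Open Scope ring_scope.

Lemma finField_unit_generator (K : finFieldType) :
  exists a : K, forall x, x != 0 -> exists i, x = a ^+ i.
Proof.
have /cyclicP[u Du] := field_unit_group_cyclic [set: {unit K}]%G.
exists (val u) => x nz_x.
have : finField_unit nz_x \in <[u]>%g by rewrite -Du inE.
by case/cycleP=> i Dx; exists i; rewrite -val_unitX -Dx.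
Qed.

Lemma annihilator_poly_exists (F0 : fieldType) (L : comNzRingType)
    (iota : {rmorphism F0 -> L}) (a : L) (h0 : {poly F0}) :
  h0 != 0 -> root (map_poly iota h0) a ->
  exists g : {poly F0}, [/\ g != 0, root (map_poly iota g) a
    & forall h, root (map_poly iota h) a -> g %| h].
Proof.
move=> nz_h0 h0a.
pose P k := exists g : {poly F0}, [/\ g != 0, root (map_poly iota g) a & size g = k].
have [k [[[g [nz_g ga <-]] g_min] _]] :=
  dec_inh_nat_subset_has_unique_least_element P (fun k => classic (P k))
    (ex_intro _ _ (ex_intro _ h0 (And3 nz_h0 h0a erefl))).
exists g; split=> // h ha; apply/modp_eq0P/eqP; apply: contraT => nz_r.
have : (size g <= size (h %% g)%R)%N.
  apply/leP; apply: g_min; exists (h %% g); split=> //.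
  move: ha; rewrite /root {1}(divp_eq h g) rmorphD rmorphM /= !hornerE.
  by move/eqP: ga => ->; rewrite mulr0 add0r.
by rewrite leqNgt ltn_modp nz_g.
Qed.

Section RMorphismOfAxioms.
Variables (R S : pzRingType) (s : R -> S).
Hypotheses (sB : {morph s : x y / x - y}) (sM : {morph s : x y / x * y}) (s1 : s 1 = 1).

Definition rmorph_of_axioms := s.
HB.instance Definition _ := GRing.isZmodMorphism.Build R S rmorph_of_axioms sB.
HB.instance Definition _ :=
  GRing.isMonoidMorphism.Build R S rmorph_of_axioms (s1, sM).
Definition RMorphism_of_axioms : {rmorphism R -> S} := rmorph_of_axioms.

End RMorphismOfAxioms.

Section FinFieldEmbedding.
Variables (p : nat) (K K' : finFieldType).
Hypotheses (pK : p \in [pchar K]) (pK' : p \in [pchar K']) (cardKK' : #|K| = #|K'|).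
Local Notation R := (pPrimeCharType pK).
Local Notation R' := (pPrimeCharType pK').
Local Notation ev iota h x := ((map_poly iota h).[x]).

(* Send a primitive element [a] of [K] to a root [b] in [K'] of its minimal
   polynomial [g] over [F_p]; [b] exists because [g] divides ['X^q - 'X]. *)
Lemma pchar_finField_rmorph_exists : exists s : R -> R',
  [/\ {morph s : x y / x - y}, {morph s : x y / x * y} & s 1 = 1].
Proof.
pose i1 := in_alg R; pose i2 := in_alg R'.
have [a a_gen] := finField_unit_generator K.
pose P0 : {poly 'F_p} := 'X^#|K| - 'X.
have P0E (L : nzRingType) (iota : {rmorphism 'F_p -> L}) : map_poly iota P0 = 'X^#|K| - 'X.
  by rewrite rmorphB /= map_polyXn map_polyX.
have nz_P0 : P0 != 0.
  rewrite -size_poly_eq0 /P0 size_polyDl ?size_polyXn // size_polyN size_polyX.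
  by rewrite ltnS finNzRing_gt1.
have P0a : root (map_poly i1 P0) a by rewrite /root P0E !hornerE expf_card subrr.
have [g [nz_g ga g_dvd]] := annihilator_poly_exists nz_P0 P0a.
have [b gb] : exists b : R', root (map_poly i2 g) b.
  have : map_poly i2 g %| \prod_(x : R') ('X - x%:P).
    by rewrite -finField_genPoly -cardKK' -(P0E _ i2) dvdp_map g_dvd.
  case/dvdp_prod_XsubC=> msk Dg.
  have := root_size_gt1 _ ga; rewrite map_poly_eq0 nz_g size_map_poly => /(_ isT).
  rewrite -(size_map_poly i2) (eqp_size Dg) size_prod_XsubC.
  case Emsk: (mask _ _) => [|b s] // _; exists b.
  by rewrite (eqp_root Dg) Emsk root_prod_XsubC mem_head.
have ev_transfer h1 h2 : ev i1 h1 a = ev i1 h2 a -> ev i2 h1 b = ev i2 h2 b.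
  move=> e12; apply/eqP; rewrite -subr_eq0 -hornerN -hornerD -!rmorphB.
  apply: root_dvdp gb; rewrite dvdp_map g_dvd //.
  by rewrite /root rmorphB /= hornerD hornerN e12 subrr.
have ev_onto (x : R) : exists h, ev i1 h a == x.
  have [-> | /a_gen[i ->]] := eqVneq x 0; first by exists 0; rewrite rmorph0 horner0.
  by exists 'X^i; rewrite map_polyXn hornerXn.
pose P x := xchoose (ev_onto x).
have PE x : ev i1 (P x) a = x := eqP (xchooseP (ev_onto x)).
exists (fun x => ev i2 (P x) b); split.
- move=> x y; rewrite -hornerN -hornerD -rmorphB; apply: ev_transfer.
  by rewrite rmorphB /= hornerD hornerN !PE.
- move=> x y; rewrite -hornerM -rmorphM; apply: ev_transfer.
  by rewrite rmorphM /= hornerM !PE.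
- have := ev_transfer (P 1) 1; rewrite PE !rmorph1 !hornerC; exact.
Qed.

End FinFieldEmbedding.

Lemma finField_rmorph_exists (K K' : finFieldType) :
  #|K| = #|K'| -> inhabited {rmorphism K -> K'}.
Proof.
move=> cardKK'; have [p p_pr pK] := finPcharP K.
have pK' : p \in [pchar K'].
  apply: (@card_finPcharP _ p (logn p #|K|)) => //.
  by rewrite -cardKK'; exact: (card_pprimeChar pK).
have [s [sB sM s1]] := pchar_finField_rmorph_exists pK pK' cardKK'.
exact: inhabits (RMorphism_of_axioms sB sM s1).
Qed.

Section RowSpaces.
Variable F : fieldType.

Lemma rV_submx_sym n (x u : 'rV[F]_n) : x != 0 -> (x <= u)%MS -> (u <= x)%MS.
Proof.
move=> nz_x xu; have nz_u : u != 0.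
  by apply: contraNneq nz_x => u0; rewrite -submx0 (submx_trans xu) // u0 sub0mx.
by rewrite -(mxrank_leqif_sup xu).2 !rank_rV nz_x nz_u.
Qed.

Lemma mxrank_adds_rV k n (M : 'M[F]_(k, n)) (x : 'rV[F]_n) :
  x != 0 -> \rank (M + <<x>>)%MS = (\rank M + ~~ (x <= M)%MS)%N.
Proof.
move=> nz_x; have [xM | xNM] /= := boolP (x <= M)%MS.
  by rewrite addn0; have /addsmx_idPl -> : (<<x>> <= M)%MS by rewrite genmxE.
have := mxrank_leqif_sup (addsmxSl M <<x>>%MS).
rewrite addsmx_sub submx_refl genmxE (negbTE xNM) => -[le_MMx /negbT neq_MMx].
have := (mxrank_adds_leqif M <<x>>%MS).1; rewrite mxrank_gen rank_rV nz_x addn1.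
by move=> le_Mx_M1; apply/eqP; rewrite eqn_leq le_Mx_M1 ltn_neqAle neq_MMx le_MMx.
Qed.

Lemma mxrank_adds_rV2 n (a b : 'rV[F]_n) :
  a != 0 -> b != 0 -> ~~ (b <= a)%MS -> \rank (<<a>> + <<b>>)%MS = 2%N.
Proof. by move=> nz_a nz_b ba; rewrite mxrank_adds_rV // mxrank_gen rank_rV nz_a genmxE ba. Qed.

Lemma mxrank_adds_rV_le2 n (a b : 'rV[F]_n) : (\rank (<<a>> + <<b>>)%MS <= 2)%N.
Proof.
apply: leq_trans (mxrank_adds_leqif _ _).1 _.
by rewrite !mxrank_gen !rank_rV (leq_add (leq_b1 _) (leq_b1 _)).
Qed.

Lemma capmx_neq0 k1 k2 n (P : 'M[F]_(k1, n)) (Q : 'M[F]_(k2, n)) :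
  (\rank (P + Q)%MS < \rank P + \rank Q)%N -> (P :&: Q)%MS != 0.
Proof. by rewrite -mxrank_sum_cap -{1}[\rank (P + Q)%MS]addn0 ltn_add2l lt0n mxrank_eq0. Qed.

End RowSpaces.

Lemma submx_of_map_rV (K F : fieldType) (phi : {rmorphism K -> F}) k n
    (M : 'M[K]_(k, n)) (u : 'rV[K]_n) (x : 'rV[F]_n) :
  x != 0 -> (x <= map_mx phi u)%MS -> (x <= map_mx phi M)%MS -> (u <= M)%MS.
Proof.
move=> nz_x xu xM; rewrite -(map_submx phi).
exact: submx_trans (rV_submx_sym nz_x xu) xM.
Qed.

Section ColumnMatroid.
Variables (F : fieldType) (I : finType) (r : nat) (w : I -> 'rV[F]_r).
Implicit Types (S T L : {set I}).

Lemma sub_spanS S i : i \in S -> (w i <= spanS w S)%MS.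
Proof. by move=> iS; apply: (sumsmx_sup i) => //; rewrite genmxE. Qed.

Lemma spanSS S T : S \subset T -> (spanS w S <= spanS w T)%MS.
Proof.
by move=> /subsetP sST; apply/sumsmx_subP => i iS; rewrite genmxE sub_spanS ?sST.
Qed.

Lemma spanS_setU1 i S : (spanS w (i |: S) :=: <<w i>> + spanS w S)%MS.
Proof.
apply/eqmxP/andP; split.
  apply/sumsmx_subP => j /setU1P[-> | jS]; rewrite genmxE.
    by rewrite -genmxE addsmxSl.
  exact: submx_trans (sub_spanS jS) (addsmxSr _ _).
by rewrite addsmx_sub genmxE sub_spanS ?setU11 // spanSS // subsetUr.
Qed.

Lemma mem_cl S i : (i \in cl w S) = (w i <= spanS w S)%MS.
Proof.
rewrite inE /rk (spanS_setU1 i S) addsmxC.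
have [-> | nz_wi] := eqVneq (w i) 0.
  by rewrite genmx0 addsmx0 sub0mx eqxx.
by rewrite mxrank_adds_rV // -{2}[\rank _]addn0 eqn_add2l eqb0 negbK.
Qed.

Lemma spanS_cl S : (spanS w (cl w S) <= spanS w S)%MS.
Proof. by apply/sumsmx_subP => i; rewrite mem_cl genmxE. Qed.

Lemma flat_mem S i : is_flat w S -> (w i <= spanS w S)%MS -> i \in S.
Proof. by move=> /subsetP flatS wi; rewrite flatS ?mem_cl. Qed.

Lemma line_flat L : is_line w L -> is_flat w L.
Proof. by case/andP. Qed.

Lemma line_rank L : is_line w L -> \rank (spanS w L) = 2%N.
Proof. by case/andP=> _ /eqP. Qed.

Lemma line_eq L1 L2 : is_line w L1 -> is_line w L2 ->
  (spanS w L1 <= spanS w L2)%MS -> L1 = L2.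
Proof.
move=> lL1 lL2 s12.
have s21 : (spanS w L2 <= spanS w L1)%MS.
  by rewrite -(mxrank_leqif_sup s12).2 !line_rank.
apply/eqP; rewrite eqEsubset; apply/andP; split; apply/subsetP => i iL.
  exact: flat_mem (line_flat lL2) (submx_trans (sub_spanS iL) s12).
exact: flat_mem (line_flat lL1) (submx_trans (sub_spanS iL) s21).
Qed.

End ColumnMatroid.

Lemma map_spanS (K F : fieldType) (phi : {rmorphism K -> F}) (I : finType) r
    (w : I -> 'rV[K]_r) S :
  (map_mx phi (spanS w S) :=: spanS (fun i => map_mx phi (w i)) S)%MS.
Proof.
apply/eqmxP; rewrite /spanS; elim/big_ind2: _ => [|M1 N1 M2 N2 e1 e2|i _].
- by rewrite map_mx0 submx_refl.
- apply/eqmxP; apply: eqmx_trans (map_addsmx _ _ _) _.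
  by apply: adds_eqmx; apply/eqmxP.
- exact/eqmxP/map_genmx.
Qed.

Section ProjectiveGeometry.
Variables (K F : fieldType) (phi : {rmorphism K -> F}) (n m : nat).
Variable A : 'I_m -> 'rV[K]_n.
Hypothesis hA : is_PG_rep A.

Lemma PG_point_above k (M : 'M[K]_(k, n)) :
  M != 0 -> (\rank M <= 1)%N -> exists i, (M <= A i)%MS.
Proof.
move=> nz_M rkM; have nz_u : nz_row M != 0 by rewrite nz_row_eq0.
have [_ _ /(_ _ nz_u)[i ui]] := hA; exists i; apply: submx_trans ui.
by rewrite -(mxrank_leqif_sup (nz_row_sub M)).2 rank_rV nz_u eqn_leq lt0n mxrank_eq0 nz_M rkM.
Qed.

(* A vector of [F^n] is generic when it is not a multiple of a point of [PG(n-1,q)]: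
   then a [K]-subspace of rank at most 2 whose image contains it lies in every
   [K]-subspace whose image contains it, since the intersection of the two
   [K]-subspaces cannot be a point. *)
Lemma generic_submxE k1 k2 (B : 'M[K]_(k1, n)) (C : 'M[K]_(k2, n)) (x : 'rV[F]_n) :
  x != 0 -> (forall i, ~~ (x <= map_mx phi (A i))%MS) ->
  (x <= map_mx phi B)%MS -> (\rank B <= 2)%N ->
  (x <= map_mx phi C)%MS = (B <= C)%MS.
Proof.
move=> nz_x x_gen xB rkB; apply/idP/idP => [xC | BC]; last first.
  by apply: submx_trans xB _; rewrite map_submx.
have xBC : (x <= map_mx phi (B :&: C))%MS by rewrite (map_capmx phi B C) sub_capmx xB xC.
have [le_BC1 | lt1_BC] := leqP (\rank (B :&: C)%MS) 1.
  have nz_BC : (B :&: C)%MS != 0.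
    by apply: contraNneq nz_x => BC0; rewrite -submx0 (submx_trans xBC) // BC0 map_mx0.
  have [i BCi] := PG_point_above nz_BC le_BC1.
  by have := x_gen i; rewrite (submx_trans xBC) // map_submx.
have : (B <= B :&: C)%MS.
  by rewrite -(mxrank_leqif_sup (capmxSl B C)).2 eqn_leq mxrankS ?capmxSl ?(leq_trans rkB).
by rewrite sub_capmx => /andP[].
Qed.

End ProjectiveGeometry.

Definition PGbar_rank (K : fieldType) (n m : nat) (A : 'I_m -> 'rV[K]_n)
    (L0 : {set 'I_m}) (f : 'I_m) (T : {set 'I_m}) (X : {set {set 'I_m}}) : nat :=
  match #|X| with
  | 0 => \rank (spanS A T)
  | 1 => \rank (spanS A T) + ~~ (spanS A (odflt set0 [pick L in X]) <= spanS A T)%MS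
  | _ => \rank (spanS A T + <<A f>>) + ~~ (spanS A L0 <= spanS A T + <<A f>>)%MS
  end.

Lemma calLP (K : fieldType) (n m : nat) (A : 'I_m -> 'rV[K]_n) L0 f L :
  L \in calL A L0 f -> [/\ is_line A L, L \subset cl A (f |: L0) & f \notin L].
Proof. by rewrite inE => /and3P. Qed.

Lemma spanS_PGbar (K F : fieldType) (phi : {rmorphism K -> F}) (n m : nat)
    (A : 'I_m -> 'rV[K]_n) (vL : {set 'I_m} -> 'rV[F]_n) (S : {set 'I_m + {set 'I_m}}) :
  spanS (PGbar_vec phi A vL) S =
    (spanS (fun i => map_mx phi (A i)) [set i | inl i \in S]
       + \sum_(L in [set L | inr L \in S]) <<vL L>>)%MS.
Proof.
by rewrite /spanS big_sumType; congr (_ + _)%MS; apply: eq_bigl => x; rewrite inE.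
Qed.

Section PGbarRank.
Variables (K F : fieldType) (phi : {rmorphism K -> F}) (n m : nat).
Variable A : 'I_m -> 'rV[K]_n.
Hypothesis hA : is_PG_rep A.
Variables (L0 : {set 'I_m}) (f : 'I_m) (v : 'rV[F]_n) (vL : {set 'I_m} -> 'rV[F]_n).
Hypotheses (hL0 : is_line A L0) (hf : f \notin L0).
Hypotheses (hv_span : (v <= spanS (fun i => map_mx phi (A i)) L0)%MS)
  (hv_npar : forall i, i \in L0 -> ~~ (v <= map_mx phi (A i))%MS)
  (hvL : forall L, L \in calL A L0 f ->
     [/\ vL L != 0, (vL L <= spanS (fun i => map_mx phi (A i)) L)%MS
       & (vL L <= <<v>> + <<map_mx phi (A f)>>)%MS]).

Local Notation MK := (spanS A).
Local Notation MF := (spanS (fun i => map_mx phi (A i))).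
Local Notation pA i := (map_mx phi (A i)).
Local Notation gen x := (forall i, ~~ (x <= pA i)%MS).

Let v_span : (v <= map_mx phi (MK L0))%MS. Proof. by rewrite map_spanS. Qed.

Let vL_span L : L \in calL A L0 f -> (vL L <= map_mx phi (MK L))%MS.
Proof. by move=> /hvL[]; rewrite map_spanS. Qed.

Let nz_A i : A i != 0. Proof. by case: hA. Qed.
Let A_npar i j : i != j -> ~~ (A i <= A j)%MS. Proof. by case: hA => _ /(_ i j). Qed.

Lemma v_neq0 : v != 0.
Proof.
have [i iL0] : exists i, i \in L0.
  apply/set0Pn/negP => /eqP L0_0.
  by have := line_rank hL0; rewrite L0_0 /spanS big_set0 mxrank0.
by apply: contraNneq (hv_npar iL0) => ->; apply: sub0mx.
Qed.

Lemma v_generic : gen v.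
Proof.
move=> i; apply/negP => vi.
by have := hv_npar (flat_mem (line_flat hL0) (submx_of_map_rV v_neq0 vi v_span)); rewrite vi.
Qed.

(* If [x_L] were a multiple of a point [A i], that point would lie on [L] and
   on the line through [v] and [A f], which then would be the [K]-line
   through [A i] and [A f] and would contain [L0], forcing [f] into [L0]. *)
Lemma vL_generic L : L \in calL A L0 f -> gen (vL L).
Proof.
move=> hL i; apply/negP => xi; have [nz_x _ xl] := hvL hL; have [lL _ fNL] := calLP hL.
have iL : i \in L := flat_mem (line_flat lL) (submx_of_map_rV nz_x xi (vL_span hL)).
have neq_if : i != f by apply: contraNneq fNL => <-.
set M2 := (<<A i>> + <<A f>>)%MS.
have rk_M2 : \rank M2 = 2%N by rewrite mxrank_adds_rV2 ?nz_A ?A_npar // eq_sym.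
have M2_l : (map_mx phi M2 <= <<v>> + <<pA f>>)%MS.
  rewrite map_addsmx addsmx_sub !map_genmx !genmxE -{1}(genmxE (pA f)) addsmxSr andbT.
  exact: submx_trans (rV_submx_sym nz_x xi) xl.
have v_l : (v <= <<v>> + <<pA f>>)%MS by apply: submx_trans (addsmxSl _ _); rewrite genmxE.
have v_M2 : (v <= map_mx phi M2)%MS.
  apply: submx_trans v_l _.
  rewrite -(mxrank_leqif_sup M2_l).2 mxrank_map rk_M2 eqn_leq mxrank_adds_rV_le2.
  by rewrite -{1}rk_M2 -(mxrank_map phi) mxrankS.
have L0_M2 : (MK L0 <= M2)%MS.
  by rewrite -(generic_submxE hA _ v_neq0 v_generic v_span (eq_leq (line_rank hL0))).
have : (M2 <= MK L0)%MS by rewrite -(mxrank_leqif_sup L0_M2).2 rk_M2 line_rank.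
rewrite addsmx_sub !genmxE => /andP[_ AfL0].
by move: hf; rewrite (flat_mem (line_flat hL0) AfL0).
Qed.

Lemma vL_sub_eq L1 L2 :
  L1 \in calL A L0 f -> L2 \in calL A L0 f -> (vL L1 <= vL L2)%MS -> L1 = L2.
Proof.
move=> hL1 hL2 x12; have [nz_x1 _ _] := hvL hL1.
have [lL1 _ _] := calLP hL1; have [lL2 _ _] := calLP hL2.
apply: (line_eq lL1 lL2).
rewrite -(generic_submxE hA _ nz_x1 (vL_generic hL1) (vL_span hL1) (eq_leq (line_rank lL1))).
exact: submx_trans x12 (vL_span hL2).
Qed.

Lemma sum_vL (X : {set {set 'I_m}}) : X \subset calL A L0 f -> (1 < #|X|)%N ->
  (\sum_(L in X) <<vL L>> :=: <<v>> + <<pA f>>)%MS.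
Proof.
move=> sXL /card_gt1P[L1 [L2 [L1X L2X neq12]]].
have [hL1 hL2] := (subsetP sXL _ L1X, subsetP sXL _ L2X).
have [nz_x1 _ _] := hvL hL1; have [nz_x2 _ _] := hvL hL2.
have sum_l : (\sum_(L in X) <<vL L>> <= <<v>> + <<pA f>>)%MS.
  by apply/sumsmx_subP => L /(subsetP sXL)/hvL[_ _]; rewrite genmxE.
have x12_sum : (<<vL L1>> + <<vL L2>> <= \sum_(L in X) <<vL L>>)%MS.
  by rewrite addsmx_sub !(sumsmx_sup _ _ (submx_refl _)).
have rk_x12 : \rank (<<vL L1>> + <<vL L2>>)%MS = 2%N.
  by apply: mxrank_adds_rV2 => //; apply: contra_neqN neq12 => /(vL_sub_eq hL2 hL1).
apply/eqmxP; rewrite sum_l -(mxrank_leqif_sup sum_l).2 eqn_leq mxrankS //=.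
by rewrite (leq_trans (mxrank_adds_rV_le2 _ _)) // -rk_x12 mxrankS.
Qed.

Lemma rank_adds_vL (T L : {set 'I_m}) : L \in calL A L0 f ->
  \rank (MF T + <<vL L>>)%MS = (\rank (MK T) + ~~ (MK L <= MK T)%MS)%N.
Proof.
move=> hL; have [nz_x _ _] := hvL hL; have [lL _ _] := calLP hL.
rewrite mxrank_adds_rV // -!map_spanS mxrank_map.
by rewrite (generic_submxE hA _ nz_x (vL_generic hL) (vL_span hL) (eq_leq (line_rank lL))).
Qed.

Lemma rank_adds_vf (T : {set 'I_m}) :
  \rank (MF T + (<<v>> + <<pA f>>))%MS =
    (\rank (MK T + <<A f>>)%MS + ~~ (MK L0 <= MK T + <<A f>>)%MS)%N.
Proof.
have MF_Af : (MF T + <<pA f>> :=: map_mx phi (MK T + <<A f>>)%MS)%MS.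
  apply: eqmx_sym; apply: eqmx_trans (map_addsmx phi _ _) _.
  exact: adds_eqmx (map_spanS phi A T) (map_genmx phi (A f)).
rewrite (addsmxC <<v>>%MS) addsmxA mxrank_adds_rV ?v_neq0 // !MF_Af mxrank_map.
by rewrite (generic_submxE hA _ v_neq0 v_generic v_span (eq_leq (line_rank hL0))).
Qed.

Lemma rk_PGbar (S : {set 'I_m + {set 'I_m}}) : S \subset PGbar_ground A L0 f ->
  rk (PGbar_vec phi A vL) S =
    PGbar_rank A L0 f [set i | inl i \in S] [set L | inr L \in S].
Proof.
move=> sSE; rewrite /rk spanS_PGbar /PGbar_rank.
set T := [set i | _]; set X := [set L | _].
have sXL : X \subset calL A L0 f.
  by apply/subsetP => L; rewrite inE => /(subsetP sSE); rewrite inE.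
case cardX: #|X| => [|[|k]].
- move/eqP: cardX; rewrite cards_eq0 => /eqP ->.
  by rewrite big_set0 addsmx0 -map_spanS mxrank_map.
- move/eqP/cards1P: cardX => [L XE]; have hL : L \in calL A L0 f.
    by rewrite (subsetP sXL) // XE set11.
  rewrite XE big_set1 rank_adds_vL //.
  by case: pickP => [L' /set1P -> // | /(_ L)]; rewrite set11.
- have sumX : (\sum_(L in X) <<vL L>> :=: <<v>> + <<pA f>>)%MS.
    by apply: sum_vL; rewrite ?cardX.
  by rewrite (adds_eqmx (eqmx_refl _) sumX) rank_adds_vf.
Qed.

End PGbarRank.

(* Coordinates [(1, y, 0, ...)] in a [K]-basis of [M]: a multiple of a
   [K]-vector would have its coordinate ratio [y] in the image of [tau]. *)
Lemma exists_generic_rV (K F : fieldType) (tau : {rmorphism K -> F}) (y : F)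
    k n (M : 'M[K]_(k, n)) :
  (forall x, tau x != y) -> (1 < \rank M)%N ->
  exists2 v : 'rV[F]_n, (v <= map_mx tau M)%MS
    & forall u : 'rV[K]_n, ~~ (v <= map_mx tau u)%MS.
Proof.
move=> tauNy rkM; pose j0 := Ordinal (ltnW rkM); pose j1 := Ordinal rkM.
pose e : 'rV[F]_(\rank M) := \row_j (if j == j0 then 1 else if j == j1 then y else 0).
set B := map_mx tau (row_base M).
have freeB : row_free B by rewrite row_free_map row_base_free.
exists (e *m B); first by rewrite (submx_trans (submxMl _ _)) // map_submx eq_row_base.
move=> u; apply/negP => /sub_rVP[lam eBu].
have nz_e : e != 0 by apply/eqP => /rowP/(_ j0); rewrite !mxE eqxx => /eqP; rewrite oner_eq0.
have nz_lam : lam != 0.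
  apply: contraNneq nz_e => lam0; apply/eqP/(row_free_inj freeB).
  by rewrite /= mul0mx eBu lam0 scale0r.
have : (map_mx tau u <= B)%MS.
  by rewrite -[map_mx tau u](scalerK nz_lam) -eBu scalemx_sub ?submxMl.
rewrite map_submx => /submxP[z uE].
have e_z : e = lam *: map_mx tau z.
  by apply: (row_free_inj freeB); rewrite /= eBu uE map_mxM scalemxAl.
have := congr1 (fun w : 'rV_(\rank M) => w 0 j0) e_z.
have := congr1 (fun w : 'rV_(\rank M) => w 0 j1) e_z.
rewrite !mxE /= => e1 e0.
have nz_t0 : tau (z 0 j0) != 0.
  by apply: contra_eq_neq e0 => ->; rewrite mulr0 oner_neq0.
have lamE : lam = (tau (z 0 j0))^-1.
  by rewrite -[lam]mulr1 -(divff nz_t0) mulrA -e0 mul1r.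
by have := tauNy (z 0 j1 / z 0 j0); rewrite fmorph_div e1 lamE mulrC eqxx.
Qed.

Lemma PGbar_data_exists (K F : fieldType) (tau : {rmorphism K -> F}) (y : F)
    (n m : nat) (A : 'I_m -> 'rV[K]_n) (L0 : {set 'I_m}) (f : 'I_m) :
  (forall x, tau x != y) -> is_PG_rep A -> is_line A L0 ->
  exists v : 'rV[F]_n, exists vL : {set 'I_m} -> 'rV[F]_n,
  [/\ (v <= spanS (fun i => map_mx tau (A i)) L0)%MS,
      forall i, i \in L0 -> ~~ (v <= map_mx tau (A i))%MS
    & forall L, L \in calL A L0 f ->
      [/\ vL L != 0, (vL L <= spanS (fun i => map_mx tau (A i)) L)%MS
        & (vL L <= <<v>> + <<map_mx tau (A f)>>)%MS]].
Proof.
move=> tauNy hA hL0; have nz_Af : A f != 0 by case: hA.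
have rk_L0 : (1 < \rank (spanS A L0))%N by rewrite line_rank.
have [v v_span v_gen] := exists_generic_rV tauNy rk_L0.
have nz_v : v != 0 by apply: contraNneq (v_gen 0) => ->; rewrite sub0mx.
set l := (<<v>> + <<map_mx tau (A f)>>)%MS.
have rk_l : \rank l = 2%N by rewrite /l addsmxC mxrank_adds_rV2 ?map_mx_eq0 ?v_gen.
pose N := spanS A (f |: L0).
have rk_N : (\rank N <= 3)%N.
  rewrite /N spanS_setU1 (leq_trans (mxrank_adds_leqif _ _).1) //.
  by rewrite mxrank_gen rank_rV line_rank // nz_Af.
have l_N : (l <= map_mx tau N)%MS.
  rewrite addsmx_sub !genmxE map_submx sub_spanS ?setU11 // andbT.
  by rewrite (submx_trans v_span) // map_submx spanSS // subsetUr.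
exists v, (fun L => nz_row (map_mx tau (spanS A L) :&: l)%MS).
split=> [| i _ | L hL]; rewrite -?map_spanS //; have [lL Lcl _] := calLP hL.
have nz_cap : (map_mx tau (spanS A L) :&: l)%MS != 0.
  apply: capmx_neq0; rewrite mxrank_map line_rank // rk_l.
  rewrite ltnS (leq_trans _ rk_N) // -(mxrank_map tau) mxrankS // addsmx_sub l_N.
  by rewrite map_submx (submx_trans (spanSS _ Lcl)) ?spanS_cl.
split; first by rewrite nz_row_eq0.
  by rewrite (submx_trans (nz_row_sub _)) ?capmxSl.
by rewrite (submx_trans (nz_row_sub _)) ?capmxSr.
Qed.

Unset Implicit Arguments.

Theorem lemma4p2 (q n : nat) (hq : exists p k : nat, prime p /\ q = (p ^ k.+1)%N)
  (hn : (3 <= n)%N)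
  (K : finFieldType) (hK : #|K| = q)
  (F : fieldType) (phi : {rmorphism K -> F})
  (m : nat) (A : 'I_m -> 'rV[K]_n) (hA : is_PG_rep A)
  (L0 : {set 'I_m}) (hL0 : is_line A L0)
  (v : 'rV[F]_n)
  (hv_span : (v <= spanS (fun i => map_mx phi (A i)) L0)%MS)
  (hv_npar : forall i, i \in L0 -> ~~ (v <= map_mx phi (A i))%MS)
  (f : 'I_m) (hf : f \notin L0)
  (vL : {set 'I_m} -> 'rV[F]_n)
  (hvL : forall L, L \in calL A L0 f ->
     [/\ vL L != 0,
         (vL L <= spanS (fun i => map_mx phi (A i)) L)%MS
       & (vL L <= <<v>> + <<map_mx phi (A f)>>)%MS]) :
  GFq_regular q (PGbar_vec phi A vL) (PGbar_ground A L0 f).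
Proof.
move=> K' F' psi cardK' psiN_onto.
have [sigma] := finField_rmorph_exists (etrans hK (esym cardK')).
pose tau : {rmorphism K -> F'} := (psi \o sigma)%FUN.
have [y tauNy] : exists y : F', forall x : K, tau x != y.
  apply: NNPP => all_im; apply: psiN_onto => y; apply: NNPP => yNim.
  by apply: all_im; exists y => x; apply/eqP => tx; apply: yNim; exists (sigma x).
have [v' [vL' [hv'_span hv'_npar hvL']]] := PGbar_data_exists f tauNy hA hL0.
exists n, (PGbar_vec tau A vL') => S sSE.
by rewrite /indep (rk_PGbar hA hL0 hf hv_span hv_npar hvL sSE)
  (rk_PGbar hA hL0 hf hv'_span hv'_npar hvL' sSE).
Qed.
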